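(* Let $[n]=E_1\sqcup\cdots\sqcup E_r$ be a partition such that $\max E_i<\min E_{i+1}$ for $i=1,\dots,r-1$, and let $f:\{1,\dots,r\}\to\{2,3,\dots\}$ be a nondecreasing map. Let $\Delta$ be the simplicial complex on $[n]$ whose facets are exactly the sets $F\subseteq[n]$ such that (1) $|E_i-F|\le1$ for $i=1,\dots,r$, and (2) if $\min([n]-F)\in E_i$ then $|F|=n-f(i)$. Then $\Delta$ is shellable.
   Context: A simplicial complex is shellable if its facets can be ordered $F_1,\dots,F_q$ so that for each $k\ge2$, $(\bigcup_{i<k}2^{F_i})\cap 2^{F_k}$ is pure of dimension $\dim F_k-1$, where $2^F$ is the set of all subsets of $F$ (facets may have different dimensions). *)

From mathcomp Require Import all_boot.
Set Implicit Arguments. Unset Strict Implicit. Unset Printing Implicit Defensive.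

(* A simplicial complex on a finite vertex set T is represented by its
   (downward closed) predicate of faces. *)

Definition gen_complex (T : finType) (A : pred {set T}) : pred {set T} :=
  fun G => [exists F, A F && (G \subset F)].

Definition is_facet (T : finType) (K : pred {set T}) (F : {set T}) : Prop :=
  K F /\ (forall H, K H -> F \subset H -> H = F).

(* A complex K is pure of dimension d if every maximal face H has
   dimension #|H| - 1 = d.  We pass m = d + 2 (to avoid negative
   dimensions), so the condition reads #|H| + 1 = m. *)
Definition pure_dim_plus2 (T : finType) (K : pred {set T}) (m : nat) : Prop :=
  forall H, is_facet K H -> #|H|.+1 = m.

(* Shellability, allowing facets of different dimensions:
   an enumeration F_1,...,F_q of all facets (without repetition) such that
   for every k >= 2, (U_{i<k} 2^{F_i}) ∩ 2^{F_k} is pure of dimension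
   dim F_k - 1, i.e. all its maximal faces H satisfy #|H| + 1 = #|F_k|
   (dim F_k - 1 = #|F_k| - 2).
   Indices below are 0-based. *)
Definition shellable (T : finType) (K : pred {set T}) : Prop :=
  exists s : seq {set T},
    [/\ uniq s,
        (forall F, F \in s <-> is_facet K F) &
        forall k, 0 < k < size s ->
          let Fk := nth set0 s k in
          pure_dim_plus2
            (fun G => (G \subset Fk) &&
                      [exists i : 'I_k, G \subset nth set0 s i])
            #|Fk| ].

Definition prop32_facet (n r : nat) (E : 'I_r -> {set 'I_n}) (f : 'I_r -> nat)
    (F : {set 'I_n}) : bool :=
  [forall i, #|E i :\: F| <= 1] &&
  [exists i, [exists x,
     [&& x \in E i, x \notin F,
         [forall y, (y \notin F) ==> (x <= y)] & #|F| + f i == n]]].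

From mathcomp Require Import all_boot zify.
Set Implicit Arguments. Unset Strict Implicit. Unset Printing Implicit Defensive.

(* The facets form an antichain, and we order them lexicographically.  If F
   precedes G and x is the first element on which they differ, then x is in G
   but not in F, and there is an earlier facet containing G - x; this exchange
   property makes each intersection of 2^G with the earlier facets generated by
   ridges G - x, hence pure.  The exchange is easiest on complements
   C = [n] - F, D = [n] - G, which meet each block at most once and have size
   f of the block of their least element: replace D by {x} ∪ S with S ⊆ D,
   where S = D - d for the next element d of D after x when min D < x, and S
   is any set of f(block x) - 1 elements of D - min D when x < min D. *)

Lemma sum_exp2_lt m : \sum_(0 <= j < m) 2 ^ j < 2 ^ m.
Proof.
elim: m => [|m IHm]; first by rewrite big_geq.
by rewrite big_nat_recr //= expnS mul2n -addnn ltn_add2r.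
Qed.

Section LexWeight.
Variable n : nat.

(* The bits of lexw A, most significant first, are the indicators of 0, ..., n-1. *)
Definition lexw (A : {set 'I_n}) : nat := \sum_(i in A) 2 ^ rev_ord i.

Lemma sum_exp2_rev_gt (y : 'I_n) :
  \sum_(i : 'I_n | y < i) 2 ^ rev_ord i < 2 ^ rev_ord y.
Proof.
rewrite (reindex_inj rev_ord_inj) /=.
have lt_yn := ltn_ord y.
rewrite (eq_big (fun j : 'I_n => j < n - y.+1) (fun j : 'I_n => 2 ^ j)); first last.
- by move=> j _; have := ltn_ord j; rewrite /= => ?; congr (2 ^ _); lia.
- by move=> j; have := ltn_ord j; rewrite /= => ?; apply/idP/idP; lia.
rewrite -(big_mkord (fun j => j < n - y.+1) (fun j => 2 ^ j)).
by have := sum_exp2_lt (n - y.+1); rewrite (big_nat_widen _ _ n) ?leq_subr.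
Qed.

Lemma lexw_lt (A B : {set 'I_n}) (y : 'I_n) :
    (forall z : 'I_n, z < y -> (z \in A) = (z \in B)) ->
  y \notin A -> y \in B -> lexw A < lexw B.
Proof.
move=> eq_below yNA yB; rewrite /lexw (bigID (fun i : 'I_n => i < y)).
rewrite [X in _ < X](bigID (fun i : 'I_n => i < y)).
rewrite (eq_bigl (fun i => (i \in B) && (i < y))) => [|i]; last first.
  by case: ltnP => [/eq_below->|]; rewrite ?andbT ?andbF.
rewrite ltn_add2l; apply: (@leq_ltn_trans (\sum_(i : 'I_n | y < i) 2 ^ rev_ord i)).
  rewrite big_mkcond [X in _ <= X]big_mkcond leq_sum // => i _.
  case: (boolP (i \in A)) => //= iA.
  by case: ltngtP => // /val_inj eq_iy; rewrite -eq_iy iA in yNA.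
apply: leq_trans (sum_exp2_rev_gt y) _.
by rewrite (bigD1 y) ?yB ?ltnn //= leq_addr.
Qed.

Lemma lexw_first_diff (A B : {set 'I_n}) : A != B -> lexw A <= lexw B ->
  exists x : 'I_n, [/\ x \in B, x \notin A & forall z : 'I_n, z < x -> (z \in A) = (z \in B)].
Proof.
move=> neqAB leAB.
pose D := (A :\: B) :|: (B :\: A).
have [x0 x0D] : exists x, x \in D.
  apply/set0Pn; apply: contraNneq neqAB => /setP D0; apply/eqP/setP => z.
  by have := D0 z; rewrite !inE; case: (z \in A); case: (z \in B).
case: (@arg_minnP _ x0 (fun z => z \in D) val x0D) => x xD minx.
have eq_below (z : 'I_n) : z < x -> (z \in A) = (z \in B).
  move=> ltzx; apply/eqP; apply: contraTT ltzx => neq; rewrite -leqNgt minx //.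
  by rewrite !inE; case: (z \in A) (z \in B) neq => -[].
move: xD; rewrite !inE => /orP[/andP[xNB xA]|/andP[xNA xB]]; last by exists x.
by have := lexw_lt (fun z zx => esym (eq_below z zx)) xNB xA; rewrite ltnNge leAB.
Qed.

End LexWeight.

Section ShellingCriterion.
Variables (T : finType) (P : pred {set T}).

Lemma pure_dim_plus2_ridges (K : pred {set T}) (G : {set T}) :
    (forall H, K H -> exists x, [/\ x \in G, K (G :\ x) & H \subset G :\ x]) ->
  pure_dim_plus2 K #|G|.
Proof.
move=> ridge H [KH maxH]; have [x [xG KGx HGx]] := ridge H KH.
by rewrite -(maxH _ KGx HGx) [#|G|](cardsD1 x) xG.
Qed.

Hypothesis P_antichain : forall F G, P F -> P G -> F \subset G -> F = G.

Lemma facet_gen_complex F : is_facet (gen_complex P) F <-> P F.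
Proof.
have gen_P G : P G -> gen_complex P G by move=> PG; apply/existsP; exists G; rewrite PG subxx.
split=> [[/existsP[G /andP[PG FG]] maxF]|PF]; first by rewrite -(maxF G (gen_P G PG) FG).
split=> [|H /existsP[G /andP[PG HG]] FH]; first exact: gen_P.
have eqFG := P_antichain PF PG (subset_trans FH HG).
by apply/eqP; rewrite eqEsubset FH eqFG HG.
Qed.

Variable w : {set T} -> nat.
Hypothesis P_exchange : forall F G, P F -> P G -> F != G -> w F <= w G ->
  exists F' x, [/\ P F', w F' < w G, x \in G, x \notin F & G :\ x \subset F'].

Lemma shellable_exchange : shellable (gen_complex P).
Proof.
pose s := sort (relpre w leq) (enum P).
have mem_s F : (F \in s) = P F by rewrite mem_sort mem_enum.
have P_nth i : i < size s -> P (nth set0 s i) by move=> lt_is; rewrite -mem_s mem_nth.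
have w_nth : {in [pred i | i < size s] &, {homo nth set0 s : i j / i <= j >-> w i <= w j}}.
  apply: sorted_leq_nth; [by move=> ? ? ?; apply: leq_trans | by move=> ?; apply: leqnn |].
  by apply: sort_sorted => A B; apply: leq_total.
have uniq_s : uniq s by rewrite sort_uniq enum_uniq.
exists s; split=> // [F|k /andP[k_gt0 lt_ks]]; first by rewrite mem_s facet_gen_complex.
apply: pure_dim_plus2_ridges => H /andP[HG /existsP[i HFi]].
have lt_is : i < size s := ltn_trans (ltn_ord i) lt_ks.
have neq_ik : nth set0 s i != nth set0 s k by rewrite nth_uniq // ltn_eqF.
have [F' [x [PF' lt_w xG xNFi GxF']]] :=
  P_exchange (P_nth i lt_is) (P_nth k lt_ks) neq_ik (w_nth _ _ lt_is lt_ks (ltnW (ltn_ord i))).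
have F's : F' \in s by rewrite mem_s.
have lt_jk : index F' s < k.
  rewrite ltnNge; apply: contraTN lt_w => le_kj; rewrite -leqNgt.
  by rewrite -[X in _ <= w X](nth_index set0 F's) w_nth // inE index_mem.
exists x; split=> //.
  by rewrite subsetDl; apply/existsP; exists (Ordinal lt_jk); rewrite /= nth_index.
apply/subsetP => z zH; rewrite !inE (subsetP HG z zH) andbT.
by apply: contraNneq xNFi => <-; apply: (subsetP HFi).
Qed.

End ShellingCriterion.

Lemma in2_injective_setU1 (T : finType) (rT : Type) (g : T -> rT) (x : T) (S : {set T}) :
    {in S &, injective g} -> {in S, forall z, g z = g x -> z = x} ->
  {in x |: S &, injective g}.
Proof.
move=> injS injx y z /setU1P[->|yS] /setU1P[->|zS] //; last exact: injS.
  by move/esym/(injx z zS).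
exact: injx.
Qed.

Lemma ex_subset_card (T : finType) (A : {set T}) k :
  k <= #|A| -> exists2 S : {set T}, S \subset A & #|S| = k.
Proof.
rewrite -bin_gt0 -cards_draws => /card_gt0P[S]; rewrite inE => /andP[SA /eqP cardS].
by exists S.
Qed.

Section Cofacets.
Variables (n : nat) (blk h : 'I_n -> nat).
Hypotheses (blk_mono : {homo blk : x y / (x <= y)%N >-> (x <= y)%N})
           (h_mono : {homo h : x y / (x <= y)%N >-> (x <= y)%N}).

(* The complements of the facets; blk numbers the blocks and h = f \o blk. *)
Definition cofacet (C : {set 'I_n}) : Prop :=
  {in C &, injective blk} /\
  exists x, [/\ x \in C, {in C, forall y : 'I_n, x <= y} & #|C| = h x].

Lemma cofacet_card C x :
  cofacet C -> x \in C -> {in C, forall y : 'I_n, x <= y} -> #|C| = h x.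
Proof.
case=> _ [m [mC minm ->]] xC minx.
by congr h; apply/val_inj/eqP; rewrite eqn_leq minm ?minx.
Qed.

Lemma cofacet_antichain C D : cofacet C -> cofacet D -> D \subset C -> C = D.
Proof.
move=> [_ [c [cC minc cardC]]] [_ [m [mD minm cardD]]] DC.
apply/eqP; rewrite eq_sym eqEcard DC cardC cardD h_mono //.
exact: minc (subsetP DC m mD).
Qed.

Section Exchange.
Variables (C D : {set 'I_n}) (x m : 'I_n).
Hypotheses (cC : cofacet C) (cD : cofacet D) (xC : x \in C) (xND : x \notin D)
           (eq_below : forall z : 'I_n, z < x -> (z \in C) = (z \in D))
           (mD : m \in D) (minm : {in D, forall y : 'I_n, m <= y}).

Lemma cofacet_exchange_below : m < x ->
  exists d, [/\ d \in D, x < d & cofacet (x |: (D :\ d))].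
Proof.
move=> lt_mx; have [[injC _] [injD _]] := (cC, cD).
have [d0 d0D] : exists d, (d \in D) && (x < d).
  have /subsetPn[d dD dNC] : ~~ (D \subset C).
    by apply: contraNN xND => /(cofacet_antichain cC cD) <-.
  exists d; rewrite dD /=; case: (ltngtP x d) => // [lt_dx|/val_inj eq_xd].
    by move: dNC; rewrite (eq_below lt_dx) dD.
  by move: xND; rewrite eq_xd dD.
case: (@arg_minnP _ d0 (fun d => (d \in D) && (x < d)) val d0D) => d /andP[dD lt_xd] mind.
exists d; split=> //; split.
  apply: in2_injective_setU1 => [y z /setD1P[_ yD] /setD1P[_ zD]|z /setD1P[neq_zd zD] eq_blk].
    exact: injD.
  case: (ltngtP z x) => [lt_zx|lt_xz|/val_inj //].
    by apply: (injC _ _ _ xC eq_blk); rewrite eq_below.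
  have le_dz : d <= z by apply: mind; rewrite zD.
  have eq_blk_dz : blk d = blk z.
    by apply/eqP; rewrite eqn_leq blk_mono //= eq_blk blk_mono // ltnW.
  by case/eqP: neq_zd; apply: injD.
exists m; split.
- have neq_md : m != d by apply: contraTneq lt_mx => ->; rewrite -leqNgt ltnW.
  by rewrite !inE neq_md mD orbT.
- by move=> y /setU1P[->|/setD1P[_ /minm]] //; rewrite ltnW.
- rewrite -(cofacet_card cD mD minm) [#|D|](cardsD1 d) dD cardsU1.
  by rewrite in_setD1 (negbTE xND) andbF.
Qed.

Lemma cofacet_exchange_above : x < m ->
  exists2 S : {set 'I_n}, S \subset D :\ m & cofacet (x |: S).
Proof.
move=> lt_xm; have [[injC _] [injD _]] := (cC, cD).
have minxC : {in C, forall y : 'I_n, x <= y}.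
  move=> y yC; rewrite leqNgt; apply/negP => lt_yx.
  have yD : y \in D by rewrite -eq_below.
  by have := minm yD; lia.
have cardC := cofacet_card cC xC minxC.
have h_gt0 : 0 < h x by rewrite -cardC; apply/card_gt0P; exists x.
have [S SD cardS] : exists2 S : {set 'I_n}, S \subset D :\ m & #|S| = (h x).-1.
  apply: ex_subset_card; have := cardsD1 m D; rewrite mD (cofacet_card cD mD minm) add1n.
  by have := h_mono (ltnW lt_xm); move=> le_h eq_hm; rewrite -ltnS prednK // -eq_hm.
have S_gt_m z : z \in S -> m < z /\ z \in D.
  move/(subsetP SD)/setD1P => [neq_zm zD]; split=> //.
  by rewrite ltn_neqAle (minm zD) andbT val_eqE eq_sym.
exists S => //; split.
  apply: in2_injective_setU1 => [y z /S_gt_m[_ yD] /S_gt_m[_ zD]|z /S_gt_m[lt_mz zD] eq_blk].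
    exact: injD.
  have eq_blk_mz : blk m = blk z.
    by apply/eqP; rewrite eqn_leq blk_mono ?(ltnW lt_mz) //= eq_blk blk_mono // ltnW.
  by move: lt_mz; rewrite (injD _ _ mD zD eq_blk_mz) ltnn.
exists x; split.
- exact: setU11.
- by move=> y /setU1P[->|/S_gt_m[lt_my _]] //; lia.
- have xNS : x \notin S by apply: contraNN xND => /S_gt_m[].
  by rewrite cardsU1 xNS cardS add1n prednK.
Qed.

End Exchange.

Lemma cofacet_exchange C D x : cofacet C -> cofacet D -> x \in C -> x \notin D ->
    (forall z : 'I_n, z < x -> (z \in C) = (z \in D)) ->
  exists2 S : {set 'I_n}, S \subset D &
    cofacet (x |: S) /\ {in D, forall z : 'I_n, z < x -> z \in S}.
Proof.
move=> cC cD xC xND eq_below; have [_ [m [mD minm _]]] := cD.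
case: (ltngtP m x) => [lt_mx|lt_xm|/val_inj eq_mx]; last by rewrite -eq_mx mD in xND.
- have [d [dD lt_xd cS]] := cofacet_exchange_below cC cD xC xND eq_below mD minm lt_mx.
  exists (D :\ d); first exact: subsetDl.
  split=> // z zD lt_zx; rewrite !inE zD andbT.
  by apply: contraTneq lt_zx => ->; rewrite -leqNgt ltnW.
- have [S SDm cS] := cofacet_exchange_above cC cD xC xND eq_below mD minm lt_xm.
  exists S; first exact: subset_trans SDm (subsetDl _ _).
  by split=> // z zD lt_zx; have := minm z zD; lia.
Qed.

End Cofacets.

Section OrderedPartition.
Variables (n r : nat) (E : 'I_r -> {set 'I_n}) (f : 'I_r -> nat).
Hypotheses (E_nonempty : forall i, E i != set0)
           (E_disjoint : forall i j, i != j -> [disjoint E i & E j])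
           (E_cover : forall x : 'I_n, exists i, x \in E i)
           (E_ordered : forall (i j : 'I_r), nat_of_ord j = i.+1 ->
                          forall x y, x \in E i -> y \in E j -> x < y)
           (f_mono : forall i j : 'I_r, i <= j -> f i <= f j).

Definition block (x : 'I_n) : 'I_r := xchoose (E_cover x).

Lemma mem_block x : x \in E (block x).
Proof. exact: (xchooseP (E_cover x)). Qed.

Lemma blockE x i : (x \in E i) = (block x == i).
Proof.
apply/idP/eqP=> [xEi|<-]; last exact: mem_block.
by apply/eqP; apply: contraTT xEi => /E_disjoint/disjointFr->; rewrite ?mem_block.
Qed.

Lemma E_ordered_lt (i j : 'I_r) x y : i < j -> x \in E i -> y \in E j -> x < y.
Proof.
move=> lt_ij xEi; move eq_k: (j - i.+1) => k.
elim: k j lt_ij eq_k y => [|k IHk] j lt_ij eq_k y yEj.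
  by apply: (E_ordered (_ : nat_of_ord j = i.+1) xEi yEj); lia.
have lt_j'r : j.-1 < r := leq_ltn_trans (leq_pred j) (ltn_ord j).
pose j' := Ordinal lt_j'r.
have [z zEj'] := set0Pn _ (E_nonempty j').
apply: (@ltn_trans z); first by apply: (IHk j' _ _ _ zEj') => /=; lia.
by apply: (E_ordered (_ : nat_of_ord j = j'.+1) zEj' yEj) => /=; lia.
Qed.

Lemma block_mono : {homo block : x y / (x <= y)%N >-> (x <= y)%N}.
Proof.
move=> x y le_xy; rewrite leqNgt; apply/negP => lt_yx.
by have := E_ordered_lt lt_yx (mem_block y) (mem_block x); lia.
Qed.

Lemma f_block_mono : {homo (fun x => f (block x)) : x y / (x <= y)%N >-> (x <= y)%N}.
Proof. by move=> x y /block_mono/f_mono. Qed.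

Local Notation blk := (fun x => nat_of_ord (block x)).
Local Notation h := (fun x => f (block x)).

Lemma prop32_facetP F : prop32_facet E f F <-> cofacet blk h (~: F).
Proof.
split=> [/andP[/forallP le1 /existsP[i /existsP[x]]]|[injC [x [xC minx cardC]]]].
  case/and4P=> xEi xNF /forallP minx /eqP cardF; split.
    move=> y z; rewrite !inE => yNF zNF /val_inj eq_yz.
    apply: (card_le1_eqP (le1 (block y))); rewrite !inE ?yNF ?zNF /= ?mem_block //.
    by rewrite eq_yz mem_block.
  exists x; split=> [|y|]; rewrite ?inE //; first by move/(implyP (minx y)).
  by have := cardsC F; rewrite card_ord; move: xEi; rewrite blockE => /eqP->; lia.
apply/andP; split.
  apply/forallP => i; apply/card_le1_eqP => y z; rewrite !inE !blockE.
  by case/andP=> yNF /eqP eq_y /andP[zNF /eqP eq_z]; apply: injC; rewrite ?inE // eq_y eq_z.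
apply/existsP; exists (block x); apply/existsP; exists x.
apply/and4P; split; [exact: mem_block | by rewrite -in_setC | |].
  by apply/forallP => y; apply/implyP; rewrite -in_setC; apply: minx.
by have := cardsC F; rewrite card_ord cardC; lia.
Qed.

Lemma prop32_antichain F G :
  prop32_facet E f F -> prop32_facet E f G -> F \subset G -> F = G.
Proof.
move=> /prop32_facetP cF /prop32_facetP cG FG; apply: setC_inj.
by apply: (cofacet_antichain f_block_mono cF cG); rewrite setCS.
Qed.

Lemma prop32_exchange F G :
    prop32_facet E f F -> prop32_facet E f G -> F != G -> lexw F <= lexw G ->
  exists F' x, [/\ prop32_facet E f F', lexw F' < lexw G, x \in G, x \notin F
                 & G :\ x \subset F'].
Proof.
move=> /prop32_facetP cF /prop32_facetP cG neqFG leFG.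
have [x [xG xNF eq_below]] := lexw_first_diff neqFG leFG.
have [S SG [cS S_below]] : exists2 S : {set 'I_n}, S \subset ~: G &
    cofacet blk h (x |: S) /\ {in ~: G, forall z : 'I_n, z < x -> z \in S}.
  apply: (cofacet_exchange block_mono f_block_mono cF cG); rewrite ?inE ?negbK //.
  by move=> z /eq_below; rewrite !inE => ->.
have SNG z : z \in S -> z \notin G by move/(subsetP SG); rewrite inE.
exists (~: (x |: S)), x; split=> //; first by apply/prop32_facetP; rewrite setCK.
- apply: lexw_lt xG; last by rewrite !inE eqxx.
  move=> z lt_zx; rewrite !inE -val_eqE (ltn_eqF lt_zx) /=.
  apply/idP/idP => [zNS|zG]; last by apply: contraL zG; apply: SNG.
  by apply: contraR zNS => zNG; apply: S_below lt_zx; rewrite inE.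
- apply/subsetP => z; rewrite !inE negb_or => /andP[-> zG] /=.
  by apply: contraL zG; apply: SNG.
Qed.

End OrderedPartition.

Theorem proposition3p2 (n r : nat) (E : 'I_r -> {set 'I_n}) (f : 'I_r -> nat)
  (E_nonempty : forall i, E i != set0)
  (E_disjoint : forall i j, i != j -> [disjoint E i & E j])
  (E_cover : forall x : 'I_n, exists i, x \in E i)
  (E_ordered : forall (i j : 'I_r), nat_of_ord j = i.+1 ->
                 forall x y, x \in E i -> y \in E j -> x < y)
  (f_ge2 : forall i, 2 <= f i)
  (f_mono : forall i j : 'I_r, i <= j -> f i <= f j) :
  shellable (gen_complex (prop32_facet E f)).
Proof.
apply: shellable_exchange.
  exact: (prop32_antichain E_nonempty E_disjoint E_cover E_ordered f_mono).
exact: (prop32_exchange E_nonempty E_disjoint E_cover E_ordered f_mono).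
Qed.
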